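(* For a nonzero real sequence $(\lambda_i)_{i\ge 0}$, let $\mathcal{H}_\lambda=\{\sum_i a_ix^i\in\mathbb{R}[x]:\sum_i a_i\lambda_i=0\}$. Among such hyperplanes with $\lambda_0=0$ and $\lambda_1\neq 0$, the ones that are closed under multiplication are exactly the following: (1) $\mathcal{H}_{\beta,\gamma}=\{p\in\mathbb{R}[x]: p(\beta)=p(\gamma)\}$ for real numbers $\beta\neq\gamma$; (2) $\mathcal{H}_\delta=\{p\in\mathbb{R}[x]: p'(\delta)=0\}$ for $\delta\in\mathbb{R}$; (3) $\mathcal{H}_{z,\bar z}=\{p\in\mathbb{R}[x]: p(z)=p(\bar z)\}=\{p\in\mathbb{R}[x]:\operatorname{Im}p(z)=0\}$ for $z\in\mathbb{C}\setminus\mathbb{R}$. *)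

From HB Require Import structures.
From mathcomp Require Import all_boot all_order all_algebra.
From mathcomp Require Import complex.
From mathcomp Require Import reals.
Set Implicit Arguments. Unset Strict Implicit. Unset Printing Implicit Defensive.
Import Order.TTheory GRing.Theory Num.Theory.
Local Open Scope ring_scope.

Definition Hlam (R : realType) (lam : nat -> R) : pred {poly R} :=
  fun p => \sum_(i < size p) p`_i * lam i == 0.

Definition mul_closed (R : realType) (H : pred {poly R}) : Prop :=
  forall p q, H p -> H q -> H (p * q).

Definition ceval (R : realType) (p : {poly R}) (z : R[i]) : R[i] :=
  (map_poly (real_complex R) p).[z].

(* Write L(p) = sum_i a_i lam_i ([pairing lam p]), so that H_lam is the kernel
   of the linear form L, and mu_k = lam_k / lam_1.  Each e_k = x^k - mu_k x lies
   in ker L.  If ker L is closed under products, the identity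
     q x^n = e_2 e_n + (mu_2^2 - mu_3) e_n + mu_n (e_3 - mu_2 e_2),
   with q = x^2 - mu_2 x + mu_2^2 - mu_3, puts every multiple of q in ker L; as
   lam_0 = 0, L(p) is then lam_1 times the coefficient of x in p mod q.  That
   coefficient is read off the roots of q: it is (p(a) - p(b)) / (a - b) for two
   distinct roots a, b (both real, or z and its conjugate), and p'(d) for a
   double root d. *)

From HB Require Import structures.
From mathcomp Require Import all_boot all_order all_algebra.
From mathcomp Require Import complex.
From mathcomp Require Import reals.
From mathcomp Require Import ring.

Set Implicit Arguments.
Unset Strict Implicit.
Unset Printing Implicit Defensive.

Import Order.TTheory GRing.Theory Num.Theory.
Local Open Scope ring_scope.

Definition pairing (R : comNzRingType) (lam : nat -> R) (p : {poly R}) : R :=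
  \sum_(i < size p) p`_i * lam i.

Section Pairing.
Variables (R : comNzRingType) (lam : nat -> R).

Lemma pairing_widen n (p : {poly R}) :
  (size p <= n)%N -> pairing lam p = \sum_(i < n) p`_i * lam i.
Proof.
move=> le_p_n; rewrite /pairing -(subnKC le_p_n) big_split_ord /=.
rewrite [X in _ + X]big1 ?addr0 // => i _.
by rewrite nth_default ?mul0r // leq_addr.
Qed.

Lemma pairing_is_linear : linear_for *%R (pairing lam).
Proof.
move=> a p q; pose n := maxn (size (a *: p + q)) (maxn (size p) (size q)).
have [le_p_n le_q_n] : (size p <= n)%N /\ (size q <= n)%N.
  by rewrite !leq_max !leqnn !orbT.
rewrite !(@pairing_widen n) ?leq_maxl // mulr_sumr -big_split /=.
by apply: eq_bigr => i _; rewrite coefD coefZ mulrDl mulrA.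
Qed.

HB.instance Definition _ :=
  GRing.isLinear.Build R {poly R} R *%R (pairing lam) pairing_is_linear.

Lemma pairingD p q : pairing lam (p + q) = pairing lam p + pairing lam q.
Proof. exact: raddfD. Qed.

Lemma pairingB p q : pairing lam (p - q) = pairing lam p - pairing lam q.
Proof. exact: raddfB. Qed.

Lemma pairing_sum I (r : seq I) (P : pred I) (F : I -> {poly R}) :
  pairing lam (\sum_(i <- r | P i) F i) = \sum_(i <- r | P i) pairing lam (F i).
Proof. exact: linear_sum. Qed.

Lemma pairingZ a p : pairing lam (a *: p) = a * pairing lam p.
Proof. exact: scalarZ. Qed.

Lemma pairingXn n : pairing lam 'X^n = lam n.
Proof.
rewrite /pairing size_polyXn big_ord_recr /= big1 => [|i _].
  by rewrite coefXn eqxx mul1r add0r.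
by rewrite coefXn (ltn_eqF (ltn_ord i)) mul0r.
Qed.

Lemma pairing_size2 (p : {poly R}) :
  (size p <= 2)%N -> pairing lam p = p`_0 * lam 0 + p`_1 * lam 1.
Proof.
by move=> p_le2; rewrite (pairing_widen p_le2) !big_ord_recr big_ord0 /= add0r.
Qed.

End Pairing.

Lemma size2_polyE (R : nzRingType) (p : {poly R}) :
  (size p <= 2)%N -> p = p`_1 *: 'X + (p`_0)%:P.
Proof.
move=> p_le2; apply/polyP => -[|[|i]]; rewrite coefD coefZ coefC coefX /=.
- by rewrite mulr0 add0r.
- by rewrite mulr1 addr0.
- by rewrite mulr0 addr0 nth_default // (leq_trans p_le2).
Qed.

Definition quad_poly (R : comNzRingType) (b c : R) : {poly R} :=
  'X^2 + b *: 'X + c%:P.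

Lemma size_quad_poly (R : comNzRingType) (b c : R) : size (quad_poly b c) = 3.
Proof.
rewrite /quad_poly -addrA size_polyDl size_polyXn //.
rewrite (leq_ltn_trans (size_polyD _ _)) // gtn_max size_polyC.
rewrite (leq_ltn_trans (size_scale_leq _ _)) ?size_polyX //.
exact: leq_ltn_trans (leq_b1 _) _.
Qed.

Lemma horner_quad_poly (R : comNzRingType) (b c x : R) :
  (quad_poly b c).[x] = x ^+ 2 + b * x + c.
Proof. by rewrite /quad_poly !hornerE. Qed.

Section ModpDeg2.
Variables (F : fieldType) (q : {poly F}).
Hypothesis size_q : size q = 3.

Lemma size_modp_deg2 (p : {poly F}) : (size (p %% q)%R <= 2)%N.
Proof. by rewrite -ltnS -[3%N]size_q ltn_modp -size_poly_gt0 size_q. Qed.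

Lemma horner_map_modp_root (S : comNzRingType) (f : {rmorphism F -> S}) p a :
  root (map_poly f q) a ->
  (map_poly f p).[a] = f (p %% q)`_1 * a + f (p %% q)`_0.
Proof.
move=> /rootP qa0; rewrite {1}(divp_eq p q) {1}(size2_polyE (size_modp_deg2 p)).
rewrite !rmorphD rmorphM /= map_polyZ map_polyX map_polyC.
by rewrite !(hornerD, hornerM, hornerZ, hornerX, hornerC) qa0 mulr0 add0r.
Qed.

Lemma eq_horner_map_roots (S : idomainType) (f : {rmorphism F -> S}) p a b :
  a != b -> root (map_poly f q) a -> root (map_poly f q) b ->
  (map_poly f p).[a] = (map_poly f p).[b] <-> (p %% q)`_1 = 0.
Proof.
move=> neq_ab qa qb; rewrite !horner_map_modp_root //.
split=> [/addIr /eqP | ->]; last by rewrite rmorph0 !mul0r.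
rewrite -subr_eq0 -mulrBr mulf_eq0 subr_eq0 (negbTE neq_ab) orbF.
by rewrite fmorph_eq0 => /eqP.
Qed.

Lemma horner_deriv_modp_double_root p d :
  q = ('X - d%:P) ^+ 2 -> (p^`()).[d] = (p %% q)`_1.
Proof.
move=> qE; rewrite {1}(divp_eq p q); have := size_modp_deg2 p.
set r := p %% q => /size2_polyE {1}->; rewrite qE.
by rewrite !derivE !hornerE /=; ring.
Qed.

End ModpDeg2.

Section RealQuadratic.
Variable R : rcfType.
Local Notation toC := (real_complex R).

Lemma root_map_conjc (p : {poly R}) (z : R[i]) :
  root (map_poly toC p) z -> root (map_poly toC p) (conjc z).
Proof.
rewrite -complex_root_conj -map_poly_comp.
by rewrite (eq_map_poly (g := toC)) // => x; exact: conjc_real.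
Qed.

Lemma conjc_neq (z : R[i]) : complex.Im z != 0 -> z != conjc z.
Proof.
case: z => a b /= b_neq0; rewrite eq_complex /= eqxx /= -addr_eq0 -mulr2n.
by rewrite mulrn_eq0.
Qed.

Lemma quad_poly_roots (b c : R) :
  [\/ exists x y, [/\ x != y, root (quad_poly b c) x & root (quad_poly b c) y],
      exists d, quad_poly b c = ('X - d%:P) ^+ 2
    | exists z : R[i], [/\ complex.Im z != 0,
        root (map_poly toC (quad_poly b c)) z &
        root (map_poly toC (quad_poly b c)) (conjc z)]].
Proof.
have [z qz] : exists z, root (map_poly toC (quad_poly b c)) z.
  by apply/closed_rootP; rewrite size_map_poly size_quad_poly.
have [Imz0 | ?] := eqVneq (complex.Im z) 0; last first.
  by apply: Or33; exists z; split; last exact: root_map_conjc.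
have [x zE] : exists x, z = toC x.
  by exists (complex.Re z); case: z Imz0 {qz} => ? ? /= ->.
have /rootP qx : root (quad_poly b c) x by move: qz; rewrite zE fmorph_root.
pose y := - b - x.
have qy : root (quad_poly b c) y.
  by apply/rootP; rewrite -qx !horner_quad_poly /y; ring.
have [eq_xy | ] := eqVneq x y; last first.
  by move=> neq_xy; apply: Or31; exists x, y; split=> //; apply/rootP.
have bE : b = - (x + x) by rewrite {1}eq_xy /y; ring.
have cE : c = x ^+ 2 by rewrite -[c]subr0 -qx horner_quad_poly bE; ring.
apply: Or32; exists x.
by rewrite /quad_poly bE cE -mul_polyC polyCN polyCD polyC_exp; ring.
Qed.

End RealQuadratic.

Section RecurrencePoly.
Variables (F : fieldType) (lam : nat -> F).

Let mu k := lam k / lam 1.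

Definition recurrence_poly : {poly F} := quad_poly (- mu 2) (mu 2 ^+ 2 - mu 3).

Hypothesis lam1_neq0 : lam 1 != 0.
Hypothesis pairing_mul_closed : forall p q,
  pairing lam p = 0 -> pairing lam q = 0 -> pairing lam (p * q) = 0.

Let e k : {poly F} := 'X^k - mu k *: 'X.

Let pairing_e k : pairing lam (e k) = 0.
Proof.
by rewrite pairingB pairingZ -[X in _ * pairing _ X]expr1 !pairingXn divfK ?subrr.
Qed.

Let pairing_mul_recurrence_polyXn n : pairing lam (recurrence_poly * 'X^n) = 0.
Proof.
have -> : recurrence_poly * 'X^n =
    e 2 * e n + (mu 2 ^+ 2 - mu 3) *: e n + mu n *: (e 3 - mu 2 *: e 2).
  rewrite /recurrence_poly /quad_poly /e -!mul_polyC polyCN polyCB polyC_exp.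
  by rewrite !exprSr expr0; ring.
(* Generalizing the e_k keeps the rewrites below from unfolding them. *)
move: (pairing_e 2) (pairing_e 3) (pairing_e n).
move: (e 2) (e 3) (e n) => e2 e3 en e2_0 e3_0 en_0.
rewrite !pairingD !pairingZ pairingB pairingZ pairing_mul_closed //.
by rewrite e2_0 e3_0 en_0 !(mulr0, subr0, addr0).
Qed.

Lemma pairing_mul_recurrence_poly r : pairing lam (recurrence_poly * r) = 0.
Proof.
rewrite -[r]coefK poly_def mulr_sumr pairing_sum big1 // => i _.
by rewrite -scalerAr pairingZ pairing_mul_recurrence_polyXn mulr0.
Qed.

Hypothesis lam0 : lam 0 = 0.

Lemma pairing_modp p : pairing lam p = (p %% recurrence_poly)`_1 * lam 1.
Proof.
rewrite {1}(divp_eq p recurrence_poly) pairingD mulrC.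
rewrite pairing_mul_recurrence_poly add0r.
by rewrite pairing_size2 ?size_modp_deg2 ?size_quad_poly // lam0 mulr0 add0r.
Qed.

End RecurrencePoly.

Theorem lemma4p13 (R : realType) (lam : nat -> R)
  (hnz : exists i, lam i != 0) (h0 : lam 0%N = 0) (h1 : lam 1%N != 0) :
  mul_closed (Hlam lam) <->
  [\/ exists beta gamma : R, beta != gamma /\
        forall p : {poly R}, Hlam lam p <-> p.[beta] = p.[gamma],
      exists delta : R,
        forall p : {poly R}, Hlam lam p <-> (p^`()).[delta] = 0
    | exists z : R[i], complex.Im z != 0 /\
        forall p : {poly R}, Hlam lam p <-> ceval p z = ceval p (conjc z)].
Proof.
split=> [closed | ]; last first.
  case=> [[b [g [_ H]]] | [d H] | [z [_ H]]] p q /H hp /H hq; apply/H.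
  - by rewrite !hornerM hp hq.
  - by rewrite derivM hornerD !hornerM hp hq mulr0 mul0r addr0.
  - by rewrite /ceval rmorphM !hornerM -!/(ceval _ _) hp hq.
have pairing_closed p q :
    pairing lam p = 0 -> pairing lam q = 0 -> pairing lam (p * q) = 0.
  by move=> /eqP hp /eqP hq; apply/eqP/closed.
have HlamE p : Hlam lam p <-> (p %% recurrence_poly lam)`_1 = 0.
  rewrite -[Hlam lam p]/(pairing lam p == 0) (pairing_modp h1 pairing_closed h0).
  by rewrite mulf_eq0 (negbTE h1) orbF; split=> /eqP.
have size_q : size (recurrence_poly lam) = 3 := size_quad_poly _ _.
have [[x [y [neq_xy qx qy]]] | [d qE] | [z [Imz qz qz']]] :=
  quad_poly_roots (- (lam 2 / lam 1)) ((lam 2 / lam 1) ^+ 2 - lam 3 / lam 1).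
- apply: Or31; exists x, y; split=> // p; rewrite HlamE.
  by rewrite -(eq_horner_map_roots (f := idfun) size_q p neq_xy) ?map_poly_id.
- apply: Or32; exists d => p.
  by rewrite HlamE (horner_deriv_modp_double_root size_q _ qE).
- apply: Or33; exists z; split=> // p; rewrite HlamE.
  exact: (iff_sym (eq_horner_map_roots size_q p (conjc_neq Imz) qz qz')).
Qed.
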